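(* Let $\mathcal{I}$ be a countable nonempty set of database instances, $\mathcal{L}$ a query language, and $p$ an answer-dependent pricing function. The following two statements are equivalent: (1) $p$ has no information arbitrage; (2) there is a set function $f$, defined on subsets of $\mathcal{I}$ and taking nonnegative real values, such that $p(\mathbf{Q},E)=f(\overline{\mathcal{S}}_{\mathbf{Q}}(E))$ for every query bundle $\mathbf{Q}\in B(\mathcal{L})$ and every $E\in\{\mathbf{Q}(D):D\in\mathcal{I}\}$, and $f$ is monotone over every semilattice $\mathcal{S}^{\mathcal{L}}_D$, $D\in\mathcal{I}$.
   Context: A query is a deterministic function on $\mathcal{I}$. A query bundle $\mathbf{Q}=(Q_1,\dots,Q_n)$ is a finite tuple of queries from $\mathcal{L}$, with $\mathbf{Q}(D)=(Q_1(D),\dots,Q_n(D))$; $B(\mathcal{L})$ is the set of all finite query bundles, and for $\mathbf{Q}_1,\mathbf{Q}_2\in B(\mathcal{L})$ their union (concatenation) $\mathbf{Q}_1,\mathbf{Q}_2$ is again in $B(\mathcal{L})$. An answer-dependent pricing function assigns a price $p(\mathbf{Q},E)\ge 0$ to each $\mathbf{Q}\in B(\mathcal{L})$ and each $E\in\{\mathbf{Q}(D):D\in\mathcal{I}\}$. For $D\in\mathcal{I}$ write $D\vdash \mathbf{Q}_2\twoheadrightarrow\mathbf{Q}_1$ if for every $D'\in\mathcal{I}$ with $\mathbf{Q}_2(D')=\mathbf{Q}_2(D)$ we have $\mathbf{Q}_1(D')=\mathbf{Q}_1(D)$. $p$ has no information arbitrage if for every $D\in\mathcal{I}$ and all $\mathbf{Q}_1,\mathbf{Q}_2\in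 B(\mathcal{L})$, $D\vdash \mathbf{Q}_2\twoheadrightarrow\mathbf{Q}_1$ implies $p(\mathbf{Q}_2,\mathbf{Q}_2(D))\ge p(\mathbf{Q}_1,\mathbf{Q}_1(D))$. The conflict set is $\overline{\mathcal{S}}_{\mathbf{Q}}(E)=\{D'\in\mathcal{I}:\mathbf{Q}(D')\neq E\}$. For $D\in\mathcal{I}$, $\mathcal{S}^{\mathcal{L}}_D=\{\overline{\mathcal{S}}_{\mathbf{Q}}(\mathbf{Q}(D)):\mathbf{Q}\in B(\mathcal{L})\}$, partially ordered by inclusion (a join-semilattice with join $\cup$). $f$ is monotone over $\mathcal{S}^{\mathcal{L}}_D$ if $A\subseteq B$ with $A,B\in\mathcal{S}^{\mathcal{L}}_D$ implies $f(A)\le f(B)$. *)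

From mathcomp Require Import all_boot.
From Stdlib Require Import Reals List.
Open Scope R_scope.

Set Implicit Arguments.
Section Pricing.
Variables (I : Type) (A : Type).

Definition query := I -> A.
Definition bundle := list query.

Definition in_bundles (L : query -> Prop) (Q : bundle) : Prop :=
  forall q, List.In q Q -> L q.

Definition eval (Q : bundle) (D : I) : list A := List.map (fun q => q D) Q.

Definition valid_answer (Q : bundle) (E : list A) : Prop :=
  exists D, eval Q D = E.

Definition determines (D : I) (Q2 Q1 : bundle) : Prop :=
  forall D', eval Q2 D' = eval Q2 D -> eval Q1 D' = eval Q1 D.

Definition pricing_function (L : query -> Prop) (p : bundle -> list A -> R) : Prop :=
  forall Q E, in_bundles L Q -> valid_answer Q E -> 0 <= p Q E.

Definition no_information_arbitrage (L : query -> Prop)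
  (p : bundle -> list A -> R) : Prop :=
  forall D Q1 Q2, in_bundles L Q1 -> in_bundles L Q2 ->
    determines D Q2 Q1 -> p Q1 (eval Q1 D) <= p Q2 (eval Q2 D).

Definition conflict_set (Q : bundle) (E : list A) : I -> Prop :=
  fun D' => eval Q D' <> E.

Definition in_semilattice (L : query -> Prop) (D : I) (S : I -> Prop) : Prop :=
  exists Q, in_bundles L Q /\ S = conflict_set Q (eval Q D).

Definition monotone_over (L : query -> Prop) (D : I) (f : (I -> Prop) -> R) : Prop :=
  forall S1 S2, in_semilattice L D S1 -> in_semilattice L D S2 ->
    (forall x, S1 x -> S2 x) -> f S1 <= f S2.

End Pricing.
Arguments in_bundles {I A}.
Arguments valid_answer {I A}.
Arguments conflict_set {I A}.
Arguments eval {I A}.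
Arguments determines {I A}.

(* An inclusion of conflict sets S_Q1(Q1(D1)) ⊆ S_Q2(Q2(D2)) forces Q1(D2) = Q1(D1)
   (D2 is not in the right-hand side) and is then exactly the determinacy D2 ⊢ Q2 ->> Q1.
   So without arbitrage the price only depends on the conflict set and grows with it;
   conversely determinacy is an inclusion of conflict sets in the same semilattice. *)
From mathcomp Require Import all_boot.
From Stdlib Require Import Reals Classical ClassicalEpsilon.
Open Scope R_scope.

Set Implicit Arguments.
Unset Strict Implicit.

Section ConflictSets.
Variables (I A : Type).
Implicit Types (Q : bundle I A) (D : I).

Definition conflict_subset (S1 S2 : I -> Prop) : Prop := forall x, S1 x -> S2 x.

Lemma eval_eq_of_conflict_subset Q1 Q2 E1 D :
  conflict_subset (conflict_set Q1 E1) (conflict_set Q2 (eval Q2 D)) ->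
  eval Q1 D = E1.
Proof. by move=> sub; apply: NNPP => neq; exact (sub D neq erefl). Qed.

Lemma conflict_subset_determines Q1 Q2 D :
  conflict_subset (conflict_set Q1 (eval Q1 D)) (conflict_set Q2 (eval Q2 D)) ->
  determines D Q2 Q1.
Proof. by move=> sub D' eq2; apply: NNPP => neq1; exact (sub D' neq1 eq2). Qed.

Lemma determines_conflict_subset Q1 Q2 D :
  determines D Q2 Q1 ->
  conflict_subset (conflict_set Q1 (eval Q1 D)) (conflict_set Q2 (eval Q2 D)).
Proof. by move=> det D' neq1 eq2; exact: neq1 (det D' eq2). Qed.

End ConflictSets.

Section NoArbitrage.
Variables (I A : Type) (L : query I A -> Prop) (p : bundle I A -> list A -> R).
Hypothesis no_arb : no_information_arbitrage L p.

Lemma no_arbitrage_conflict_monotone Q1 Q2 D1 D2 :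
  in_bundles L Q1 -> in_bundles L Q2 ->
  conflict_subset (conflict_set Q1 (eval Q1 D1)) (conflict_set Q2 (eval Q2 D2)) ->
  p Q1 (eval Q1 D1) <= p Q2 (eval Q2 D2).
Proof.
move=> LQ1 LQ2 sub.
have eq1 : eval Q1 D2 = eval Q1 D1 := eval_eq_of_conflict_subset sub.
move: sub; rewrite -eq1 => sub.
exact: no_arb LQ1 LQ2 (conflict_subset_determines sub).
Qed.

Lemma no_arbitrage_conflict_eq Q1 Q2 D1 D2 :
  in_bundles L Q1 -> in_bundles L Q2 ->
  conflict_set Q1 (eval Q1 D1) = conflict_set Q2 (eval Q2 D2) ->
  p Q1 (eval Q1 D1) = p Q2 (eval Q2 D2).
Proof.
move=> LQ1 LQ2 eqS; apply: Rle_antisym;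
  apply: no_arbitrage_conflict_monotone => // x; by rewrite eqS.
Qed.

End NoArbitrage.

Section PriceOfConflictSet.
Variables (I A : Type) (L : query I A -> Prop) (p : bundle I A -> list A -> R).

Definition realizes (S : I -> Prop) (QD : bundle I A * I) : Prop :=
  in_bundles L QD.1 /\ S = conflict_set QD.1 (eval QD.1 QD.2).

(* The price of some bundle realizing [S]: independent of the choice under no arbitrage
   ([no_arbitrage_conflict_eq]); [0] on sets that are not conflict sets. *)
Definition price_of_conflict_set (S : I -> Prop) : R :=
  match excluded_middle_informative (exists QD, realizes S QD) with
  | left ex => let QD := proj1_sig (constructive_indefinite_description _ ex) in
               p QD.1 (eval QD.1 QD.2)
  | right _ => 0
  end.

Lemma price_of_conflict_set_ge0 S :
  pricing_function L p -> 0 <= price_of_conflict_set S.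
Proof.
move=> p_ge0; rewrite /price_of_conflict_set.
case: excluded_middle_informative => [ex|_]; last exact: Rle_refl.
case: constructive_indefinite_description => -[Q D] [LQ _] /=.
by apply: p_ge0 => //; exists D.
Qed.

Lemma price_of_conflict_set_eval Q D :
  no_information_arbitrage L p -> in_bundles L Q ->
  price_of_conflict_set (conflict_set Q (eval Q D)) = p Q (eval Q D).
Proof.
move=> no_arb LQ; rewrite /price_of_conflict_set.
case: excluded_middle_informative => [ex|nex]; last by exfalso; apply: nex; exists (Q, D).
case: constructive_indefinite_description => -[Q' D'] /= [LQ' eqS].
exact (no_arbitrage_conflict_eq no_arb LQ' LQ (esym eqS)).
Qed.

End PriceOfConflictSet.

Theorem theorem1 (I : countType) (A : Type) (L : query I A -> Prop)
  (p : bundle I A -> list A -> R) :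
  inhabited I ->
  pricing_function L p ->
  (no_information_arbitrage L p <->
   exists f : (I -> Prop) -> R,
     (forall S, 0 <= f S) /\
     (forall Q E, in_bundles L Q -> valid_answer Q E ->
        p Q E = f (conflict_set Q E)) /\
     (forall D : I, monotone_over L D f)).
Proof.
move=> _ p_ge0; split=> [no_arb | [f [_ [p_eq f_mono]]]].
- exists (price_of_conflict_set L p); split; [|split].
  + by move=> S; exact: price_of_conflict_set_ge0 p_ge0.
  + by move=> Q E LQ [D <-]; rewrite price_of_conflict_set_eval.
  + move=> D _ _ [Q1 [LQ1 ->]] [Q2 [LQ2 ->]] sub.
    rewrite (price_of_conflict_set_eval D no_arb LQ1) (price_of_conflict_set_eval D no_arb LQ2).
    exact (no_arbitrage_conflict_monotone no_arb LQ1 LQ2 sub).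
- move=> D Q1 Q2 LQ1 LQ2 det.
  rewrite (p_eq Q1) ?(p_eq Q2) //; try by exists D.
  apply: (f_mono D); [by exists Q1 | by exists Q2 |].
  exact: determines_conflict_subset.
Qed.
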